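(* Let $(\Omega,\mathcal{F})$ be a measurable space, $\mathcal{P}$ a nonempty set of probability measures on it, $\hat{\mathbb{E}}[Z]=\sup_{P\in\mathcal{P}}E_P[Z]$, and let $X,Y$ be random variables with $\hat{\mathbb{E}}[X^2]+\hat{\mathbb{E}}[Y^2]<\infty$. Then $$\overline{C}(X,Y)=\sup_{\mu_2\in\mathbb{R}}\inf_{\mu_1\in\mathbb{R}}\hat{\mathbb{E}}[(X-\mu_1)(Y-\mu_2)],\qquad \underline{C}(X,Y)=\inf_{\mu_2\in\mathbb{R}}\sup_{\mu_1\in\mathbb{R}}\left(-\hat{\mathbb{E}}[-(X-\mu_1)(Y-\mu_2)]\right).$$
   Context: For a random variable $W$ with $\hat{\mathbb{E}}[W^2]<\infty$: $\overline{\mu}_W=\hat{\mathbb{E}}[W]$, $\underline{\mu}_W=-\hat{\mathbb{E}}[-W]$, $M_W=[\underline{\mu}_W,\overline{\mu}_W]$. Upper covariance $\overline{C}(X,Y)=\max_{\mu_2\in M_Y}\min_{\mu_1\in M_X}\hat{\mathbb{E}}[(X-\mu_1)(Y-\mu_2)]$; lower covariance $\underline{C}(X,Y)=\min_{\mu_2\in M_Y}\max_{\mu_1\in M_X}\left(-\hat{\mathbb{E}}[-(X-\mu_1)(Y-\mu_2)]\right)$. *)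

From HB Require Import structures.
From mathcomp Require Import all_boot all_order all_algebra.
From mathcomp Require Import all_classical all_reals all_analysis.
Set Implicit Arguments. Unset Strict Implicit. Unset Printing Implicit Defensive.
Import Order.TTheory GRing.Theory Num.Theory.
Local Open Scope classical_set_scope.
Local Open Scope ring_scope.
Local Open Scope ereal_scope.

Section sublinear.
Context (d : measure_display) (T : measurableType d) (R : realType).
Variable Pset : set (probability T R).

Definition Ehat (Z : T -> R) : \bar R :=
  ereal_sup [set \int[P]_x (Z x)%:E | P in Pset].

Definition Mset (W : T -> R) : set R :=
  [set m : R | - Ehat (fun w => - W w)%R <= m%:E /\ m%:E <= Ehat W].

Definition upperC (X Y : T -> R) : \bar R :=
  ereal_sup [set ereal_inf [set Ehat (fun w => (X w - m1) * (Y w - m2))%R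
                           | m1 in Mset X] | m2 in Mset Y].

Definition lowerC (X Y : T -> R) : \bar R :=
  ereal_inf [set ereal_sup [set - Ehat (fun w => - ((X w - m1) * (Y w - m2)))%R
                           | m1 in Mset X] | m2 in Mset Y].
End sublinear.

From HB Require Import structures.
From mathcomp Require Import all_boot all_order all_algebra.
From mathcomp Require Import all_classical all_reals all_analysis.
From mathcomp Require Import ring lra measurable_realfun.
Import Order.TTheory GRing.Theory Num.Theory.
Local Open Scope classical_set_scope.
Local Open Scope ring_scope.
Local Open Scope ereal_scope.

(* For each P, E_P[(X - m1)(Y - m2)] = cov_P(X, Y) + (E_P X - m1)(E_P Y - m2),
   so both sides are sup-inf values of the upper envelope over P of the cross
   moments v_P + (x_P - m1)(y_P - m2), with x_P, y_P the means and v_P the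
   covariance.  Restricting m1 to the hull [inf x, sup x] costs nothing:
   clamping m1 to the hull can only raise a cross moment up to v_P, and
   sup_P v_P is already a lower bound of the unrestricted sup-inf (take
   m2 = y_P).  Restricting m2 to the hull of y costs nothing either: outside
   it all y_P - m2 have one sign, bounded away from 0, so the infimum over m1
   is -oo.  The lower covariance of (X, Y) is minus the upper covariance of
   (-X, Y). *)

Section envelope.
Context (R : realType) (U : Type) (I : set U).

Definition envelope (g : U -> R) : \bar R := ereal_sup [set (g P)%:E | P in I].

Definition envelope_itv (g : U -> R) : set R :=
  [set m | - envelope (fun P => - g P)%R <= m%:E /\ m%:E <= envelope g].

Lemma envelope_ge g P : I P -> (g P)%:E <= envelope g.
Proof. by move=> IP; apply: ereal_sup_ubound; exists P. Qed.

Lemma envelope_le g r : (forall P, I P -> g P <= r)%R -> envelope g <= r%:E.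
Proof. by move=> gr; apply: ge_ereal_sup => _ [P IP <-]; rewrite lee_fin gr. Qed.

Section bounded.
Variables (g : U -> R) (B : R).
Hypotheses (I0 : I !=set0) (gB : forall P, I P -> (`|g P| <= B)%R).

Let gI0 : g @` I !=set0.
Proof. by case: I0 => P IP; exists (g P); exists P. Qed.

Let gI_ub : has_ubound (g @` I).
Proof. by exists B => _ [P IP <-]; move: (gB _ IP); rewrite ler_norml => /andP[]. Qed.

Let gI_lb : has_lbound (g @` I).
Proof.
by exists (- B)%R => _ [P IP <-]; move: (gB _ IP); rewrite ler_norml => /andP[].
Qed.

Lemma envelope_itvE :
  envelope_itv g = [set m | inf (g @` I) <= m <= sup (g @` I)]%R.
Proof.
rewrite /envelope_itv.
have -> : envelope g = (sup (g @` I))%:E by rewrite -ereal_sup_EFin // image_comp.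
have -> : - envelope (fun P => - g P)%R = (inf (g @` I))%:E.
  by rewrite -ereal_inf_EFin // /ereal_inf /envelope !image_comp.
by apply/seteqP; split => m /=; rewrite !lee_fin => /andP.
Qed.

Lemma inf_le_le_sup P : I P -> (inf (g @` I) <= g P <= sup (g @` I))%R.
Proof.
move=> IP; apply/andP; split; first by apply: ge_inf => //; exists P.
by apply: sup_upper_bound; [split | exists P].
Qed.

End bounded.
End envelope.
Arguments envelope {R U} I g.
Arguments envelope_itv {R U} I g.
Arguments envelope_ge {R U I} g {P}.
Arguments envelope_le {R U I g r}.
Arguments envelope_itvE {R U I g B}.
Arguments inf_le_le_sup {R U I g B}.

Section supinf.
Context {R : realType}.
Implicit Types (F : R -> R -> \bar R) (A B : set R).

Definition supinf F A B := ereal_sup [set ereal_inf [set F m1 m2 | m1 in A] | m2 in B].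

Definition infsup F A B := ereal_inf [set ereal_sup [set F m1 m2 | m1 in A] | m2 in B].

Lemma infsup_oppe F A B : infsup (fun m1 m2 => - F m1 m2) A B = - supinf F A B.
Proof.
rewrite /infsup /supinf /ereal_inf image_comp; congr (- ereal_sup _).
by apply: eq_imagel => m2 _ /=; rewrite image_comp.
Qed.

Lemma supinf_image (f : R -> R) F A B :
  supinf F (f @` A) B = supinf (fun m1 => F (f m1)) A B.
Proof.
by rewrite /supinf; congr ereal_sup; apply: eq_imagel => m2 _; rewrite image_comp.
Qed.

End supinf.

Lemma itv_point_between (R : realDomainType) (a b m : R) : (a <= b)%R ->
  exists2 c, (a <= c <= b)%R &
    forall z, (a <= z <= b)%R -> ((z <= c <= m) || (m <= c <= z))%R.
Proof.
move=> ab; have [ma|am] := leP m a.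
  by exists a; [rewrite lexx ab | move=> z /andP[az _]; rewrite ma az orbT].
have [mb|bm] := leP m b.
  by exists m; [rewrite (ltW am) mb | move=> z _; rewrite lexx !andbT le_total].
by exists b; [rewrite ab lexx | move=> z /andP[_ zb]; rewrite zb (ltW bm)].
Qed.

Section cross_moment.
Context (R : realType) (U : Type) (I : set U) (x y v : U -> R).

Definition cross_moment (m1 m2 : R) (P : U) : R := (v P + (x P - m1) * (y P - m2))%R.

Local Notation F := (fun m1 m2 => envelope I (cross_moment m1 m2)).

Lemma cross_moment_between P m1 m2 c r :
  ((x P <= c <= m1) || (m1 <= c <= x P))%R ->
  (cross_moment m1 m2 P <= r)%R -> (v P <= r)%R -> (cross_moment c m2 P <= r)%R.
Proof.
rewrite /cross_moment => /orP[]/andP[] ? ? ? ?; have [|] := leP 0%R (y P - m2)%R; nra.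
Qed.

Lemma v_le_inf_envelope P :
  I P -> (v P)%:E <= ereal_inf [set F m1 (y P) | m1 in [set: R]].
Proof.
move=> IP; apply: le_ereal_inf_tmp => _ [m1 _ <-]; apply: le_trans (envelope_ge _ IP).
by rewrite /cross_moment subrr mulr0 addr0.
Qed.

Variable B : R.
Hypotheses (I0 : I !=set0) (xB : forall P, I P -> (`|x P| <= B)%R)
  (yB : forall P, I P -> (`|y P| <= B)%R) (vB : forall P, I P -> (v P <= B)%R).

(* Clamping [m1] to the hull of [x] moves every cross moment towards [v P],
   its value at [m1 = x P]. *)
Lemma inf_envelope_itv_le m2 r :
  ereal_inf [set F m1 m2 | m1 in [set: R]] < r%:E -> (forall P, I P -> v P <= r)%R ->
  ereal_inf [set F m1 m2 | m1 in envelope_itv I x] <= r%:E.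
Proof.
case/ereal_inf_lt => _ [m1 _ <-] Fm1r vr.
have xb := inf_le_le_sup I0 xB.
have [c cx cb] : exists2 c, (inf (x @` I) <= c <= sup (x @` I))%R &
    forall z, (inf (x @` I) <= z <= sup (x @` I))%R -> ((z <= c <= m1) || (m1 <= c <= z))%R.
  by case: I0 => P /xb /andP[lx xh]; apply: itv_point_between; exact: le_trans xh.
apply: ge_ereal_inf; exists (F c m2).
  by exists c => //; rewrite (envelope_itvE I0 xB).
apply: envelope_le => P IP; apply: (@cross_moment_between _ m1); [exact/cb/xb| |exact: vr].
by rewrite -lee_fin; apply: le_trans (envelope_ge _ IP) (ltW Fm1r).
Qed.

(* [s = 1] and [s = -1] cover [m2] below and above the range of [y]; at
   [m1 = s * (B + u)] every cross moment is at most [B - u * d <= r]. *)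
Lemma inf_envelope_gap_eqNy m2 (s d : R) : (s ^+ 2 = 1)%R -> (0 < d)%R ->
    (forall P, I P -> d <= s * (y P - m2))%R ->
  ereal_inf [set F m1 m2 | m1 in [set: R]] = -oo.
Proof.
move=> s2 d0 yd; apply: eq_ninfty => r.
pose u := (`|B - r| / d)%R.
have ud : (u * d = `|B - r|)%R by rewrite /u divfK ?gt_eqF.
have u0 : (0 <= u)%R by apply: divr_ge0; [exact: normr_ge0 | exact: ltW].
apply: ge_ereal_inf; exists (F (s * (B + u))%R m2); first by exists (s * (B + u))%R.
apply: envelope_le => P IP; rewrite /cross_moment.
have sx : (s * x P <= B)%R.
  have s1 : (`|s| = 1)%R by rewrite -sqrtr_sqr s2 sqrtr1.
  by apply: le_trans (ler_norm _) _; rewrite normrM s1 mul1r xB.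
have -> : (x P - s * (B + u) = s * (s * x P - (B + u)))%R.
  by rewrite mulrBr mulrA -expr2 s2 mul1r.
rewrite -mulrA mulrCA; have := yd _ IP; have := vB _ IP; have := ler_norm (B - r)%R.
nra.
Qed.

Lemma inf_envelope_eqNy m2 :
  ~ envelope_itv I y m2 -> ereal_inf [set F m1 m2 | m1 in [set: R]] = -oo.
Proof.
rewrite (envelope_itvE I0 yB) /= => /negP; rewrite negb_and -!ltNge => /orP[m2y|m2y].
- apply: (inf_envelope_gap_eqNy _ 1%R (inf (y @` I) - m2)%R);
    rewrite ?expr1n ?subr_gt0 // => P IP.
  by rewrite mul1r lerD2r; have /andP[] := inf_le_le_sup I0 yB _ IP.
- apply: (inf_envelope_gap_eqNy _ (-1)%R (m2 - sup (y @` I))%R);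
    rewrite ?sqrrN ?expr1n ?subr_gt0 // => P IP.
  by rewrite mulN1r opprB lerD2l lerN2; have /andP[] := inf_le_le_sup I0 yB _ IP.
Qed.

Theorem supinf_cross_moment_itv :
  supinf F (envelope_itv I x) (envelope_itv I y) = supinf F [set: R] [set: R].
Proof.
set S := supinf F [set: R] [set: R].
have GS m2 : ereal_inf [set F m1 m2 | m1 in [set: R]] <= S.
  by apply: ereal_sup_ubound; exists m2.
have vS P : I P -> (v P)%:E <= S.
  by move=> IP; exact: le_trans (v_le_inf_envelope _ IP) (GS _).
apply/eqP; rewrite eq_le; apply/andP; split; apply: ge_ereal_sup => _ [m2 _ <-].
- have [->|Sy] := eqVneq S +oo; first exact: leey.
  have [P IP] := I0.
  have Sfin : S \is a fin_num.
    by rewrite fin_numE Sy -ltNye (lt_le_trans (ltNyr _) (vS _ IP)).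
  rewrite -(fineK Sfin); apply/lee_addgt0Pr => e e0; rewrite -EFinD.
  apply: inf_envelope_itv_le.
    by apply: le_lt_trans (GS m2) _; rewrite -(fineK Sfin) lte_fin ltrDl.
  move=> Q IQ; rewrite -lee_fin; apply: le_trans (vS _ IQ) _.
  by rewrite -(fineK Sfin) lee_fin lerDl ltW.
- have [m2y|m2y] := pselect (envelope_itv I y m2); last first.
    by rewrite inf_envelope_eqNy // leNye.
  apply: le_ereal_sup_tmp; exists (ereal_inf [set F m1 m2 | m1 in envelope_itv I x]).
    by exists m2.
  by apply: ereal_inf_le_tmp; exact: image_subset.
Qed.

End cross_moment.
Arguments cross_moment {R U} x y v m1 m2 P.
Arguments supinf_cross_moment_itv {R U I x y v} B.

Lemma integral_sqr_lty_Lfun2 d (T : measurableType d) (R : realType)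
    (mu : {measure set T -> \bar R}) (f : T -> R) :
  measurable_fun setT f -> \int[mu]_x (f x ^+ 2)%:E < +oo -> f \in Lfun mu 2%:E.
Proof.
move=> mf f2; rewrite inE; apply/andP; split; first by rewrite inE.
rewrite inE /= /finite_norm unlock; apply: poweR_lty.
rewrite (eq_integral (fun x => (f x ^+ 2)%:E)) // => x _.
by rewrite /= powR_mulrn ?normr_ge0 // real_normK // num_real.
Qed.

Lemma probability_Lfun2_Lfun1 {d} {T : measurableType d} {R : realType}
    {P : probability T R} {f : T -> R} :
  f \in Lfun P 2%:E -> f \in Lfun P 1.
Proof. exact: Lfun_subset12 (fin_num_measure P _ measurableT) f. Qed.

Section second_moments.
Context d (T : measurableType d) (R : realType) (P : probability T R) (X Y : T -> R).
Hypotheses (X2 : X \in Lfun P 2%:E) (Y2 : Y \in Lfun P 2%:E).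

Let X1 := probability_Lfun2_Lfun1 X2.
Let Y1 := probability_Lfun2_Lfun1 Y2.
Let EX_fin := expectation_fin_num X1.
Let EY_fin := expectation_fin_num Y1.
Let cov_fin := covariance_fin_num X1 Y1 (Lfun2_mul_Lfun1 X2 Y2).

Lemma expectation_centered_mul (m1 m2 : R) :
  'E_P[fun w => (X w - m1) * (Y w - m2)]%R =
  (fine (covariance P X Y) + (fine 'E_P[X] - m1) * (fine 'E_P[Y] - m2))%:E.
Proof.
have c1 : cst m1 \in Lfun P 2%:E := Lfun_cst P m1 2.
have c2 : cst m2 \in Lfun P 2%:E := Lfun_cst P m2 2.
have Xm : (X \- cst m1)%R \in Lfun P 2%:E by rewrite rpredB ?lee1n.
have Ym : (Y \- cst m2)%R \in Lfun P 2%:E by rewrite rpredB ?lee1n.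
rewrite EFinD EFinM !EFinB !fineK //.
have := covarianceE (probability_Lfun2_Lfun1 Xm) (probability_Lfun2_Lfun1 Ym)
  (Lfun2_mul_Lfun1 Xm Ym).
rewrite covarianceBl // covarianceBr // covariance_cst_l covariance_cst_r.
rewrite !sube0 !expectationB ?probability_Lfun2_Lfun1 // !expectation_cst => ->.
by rewrite subeK // fin_numM // fin_numB ?EX_fin ?EY_fin.
Qed.

Lemma mean_covariance_bound (K : R) : 'E_P[X ^+ 2] + 'E_P[Y ^+ 2] <= K%:E ->
  [/\ `|fine 'E_P[X]| <= 1 + K, `|fine 'E_P[Y]| <= 1 + K
    & fine (covariance P X Y) <= K]%R.
Proof.
have VX := variance_ge0 P X; have VY := variance_ge0 P Y.
have VXY := variance_ge0 P (X \- Y)%R.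
rewrite varianceB // !varianceE // in VX VY VXY.
have X2_fin := expectation_fin_num (Lfun2_mul_Lfun1 X2 X2).
have Y2_fin := expectation_fin_num (Lfun2_mul_Lfun1 Y2 Y2).
move: VX VY VXY; rewrite -(fineK X2_fin) -(fineK Y2_fin) -(fineK EX_fin) -(fineK EY_fin).
rewrite -(fineK cov_fin) -!EFin_expe -!EFinB -!EFinD !lee_fin /=.
set ex2 := fine _; set ex := fine _; set ey2 := fine _; set ey := fine _; set c := fine _.
move=> VX VY VXY EK.
have exK : (ex ^+ 2 <= K)%R by nra.
have eyK : (ey ^+ 2 <= K)%R by nra.
by split; rewrite ?ler_norml; [apply/andP; split; nra.. | nra].
Qed.

End second_moments.
Arguments expectation_centered_mul {d T R P X Y} X2 Y2 m1 m2.
Arguments mean_covariance_bound {d T R P X Y} X2 Y2 {K}.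

Lemma expectationN d (T : measurableType d) (R : realType) (P : probability T R)
    (X : T -> R) :
  X \in Lfun P 1 -> 'E_P[fun w => - X w]%R = - 'E_P[X].
Proof.
move=> X1; have -> : (fun w => - X w)%R = ((-1) \o* X)%R.
  by apply/funext => w; rewrite /GRing.mulr_fun mulrN1.
by rewrite expectationZl // EFinN mulN1e.
Qed.

Section sublinear_covariance.
Context d (T : measurableType d) (R : realType) (Pset : set (probability T R)).

Lemma Ehat_envelope (Z : T -> R) (g : probability T R -> R) :
  (forall P, Pset P -> 'E_P[Z] = (g P)%:E) -> Ehat Pset Z = envelope Pset g.
Proof.
move=> Zg; rewrite /Ehat /envelope; congr ereal_sup.
by apply: eq_imagel => P /Zg <-; rewrite unlock.
Qed.

Lemma Mset_opp (X : T -> R) : Mset Pset (fun w => - X w)%R = -%R @` Mset Pset X.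
Proof.
rewrite /Mset /=.
have -> : (fun w => - (- X w))%R = X by apply/funext => w; rewrite opprK.
apply/seteqP; split => [m [lm mu]|_ [m [lm mu] <-]].
  by exists (- m)%R; rewrite ?opprK //= EFinN leeN2 leeNl.
by rewrite /= EFinN leeN2 leeNl.
Qed.

Lemma infsup_Ehat_oppl (X Y : T -> R) (A B : set R) :
  infsup (fun m1 m2 => - Ehat Pset (fun w => - ((X w - m1) * (Y w - m2)))%R) A B =
  - supinf (fun m1 m2 => Ehat Pset (fun w => (- X w - m1) * (Y w - m2))%R) (-%R @` A) B.
Proof.
rewrite infsup_oppe supinf_image; congr (- supinf _ _ _).
by apply/funext => m1; apply/funext => m2; congr Ehat; apply/funext => w; ring.
Qed.

Lemma lowerC_oppl (X Y : T -> R) : lowerC Pset X Y = - upperC Pset (fun w => - X w)%R Y.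
Proof. by rewrite /upperC Mset_opp; exact: infsup_Ehat_oppl. Qed.

Lemma infsup_setT_oppl (X Y : T -> R) :
  infsup (fun m1 m2 => - Ehat Pset (fun w => - ((X w - m1) * (Y w - m2)))%R)
    [set: R] [set: R] =
  - supinf (fun m1 m2 => Ehat Pset (fun w => (- X w - m1) * (Y w - m2))%R)
    [set: R] [set: R].
Proof.
rewrite infsup_Ehat_oppl; congr (- supinf _ _ _).
by apply/seteqP; split => // m _; exists (- m)%R; rewrite ?opprK.
Qed.

Lemma integral_le_Ehat {P : probability T R} {Z : T -> R} :
  Pset P -> \int[P]_w (Z w)%:E <= Ehat Pset Z.
Proof. by move=> PP; apply: ereal_sup_ubound; exists P. Qed.

Lemma Ehat_sqr_ge0 (Z : T -> R) : Pset !=set0 -> 0 <= Ehat Pset (fun w => Z w ^+ 2)%R.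
Proof.
case=> P PP; apply: le_trans (integral_le_Ehat PP).
by apply: integral_ge0 => w _; rewrite lee_fin sqr_ge0.
Qed.

Lemma Lfun2_Ehat_sqr (P : probability T R) (Z : T -> R) : Pset P ->
  measurable_fun setT Z -> Ehat Pset (fun w => Z w ^+ 2)%R < +oo -> Z \in Lfun P 2%:E.
Proof.
move=> PP mZ Zfin; apply: integral_sqr_lty_Lfun2 mZ _.
exact: le_lt_trans (integral_le_Ehat PP) Zfin.
Qed.

Lemma Mset_envelope (Z : T -> R) : (forall P, Pset P -> Z \in Lfun P 1) ->
  Mset Pset Z = envelope_itv Pset (fun P => fine 'E_P[Z]).
Proof.
move=> Z1; rewrite /Mset (@Ehat_envelope Z (fun P => fine 'E_P[Z])).
  rewrite (@Ehat_envelope _ (fun P => - fine 'E_P[Z])%R) // => P PP.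
  by rewrite expectationN ?Z1 // EFinN fineK // expectation_fin_num ?Z1.
by move=> P PP; rewrite fineK // expectation_fin_num ?Z1.
Qed.

Section square_integrable.
Variables X Y : T -> R.
Hypotheses (P0 : Pset !=set0) (mX : measurable_fun setT X) (mY : measurable_fun setT Y)
  (XY2 : Ehat Pset (fun w => X w ^+ 2)%R + Ehat Pset (fun w => Y w ^+ 2)%R < +oo).

Let K := fine (Ehat Pset (fun w => X w ^+ 2)%R + Ehat Pset (fun w => Y w ^+ 2)%R).

Let moments_le_K {P} : Pset P -> 'E_P[X ^+ 2] + 'E_P[Y ^+ 2] <= K%:E.
Proof.
move=> PP; rewrite /K fineK; first by rewrite unlock; apply: leeD; apply: integral_le_Ehat.
by rewrite ge0_fin_numE // adde_ge0 // Ehat_sqr_ge0.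
Qed.

Let X2 {P} : Pset P -> X \in Lfun P 2%:E.
Proof.
move=> PP; apply: Lfun2_Ehat_sqr => //.
exact: le_lt_trans (leeDl _ (Ehat_sqr_ge0 _ P0)) XY2.
Qed.

Let Y2 {P} : Pset P -> Y \in Lfun P 2%:E.
Proof.
move=> PP; apply: Lfun2_Ehat_sqr => //.
exact: le_lt_trans (leeDr _ (Ehat_sqr_ge0 _ P0)) XY2.
Qed.

Let x P := fine 'E_P[X].
Let y P := fine 'E_P[Y].
Let v P := fine (covariance P X Y).

Theorem upperC_setT : upperC Pset X Y =
  supinf (fun m1 m2 => Ehat Pset (fun w => (X w - m1) * (Y w - m2))%R) [set: R] [set: R].
Proof.
have -> : upperC Pset X Y = supinf (fun m1 m2 =>
    Ehat Pset (fun w => (X w - m1) * (Y w - m2))%R) (Mset Pset X) (Mset Pset Y) by [].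
have -> : (fun m1 m2 => Ehat Pset (fun w => (X w - m1) * (Y w - m2))%R) =
    (fun m1 m2 => envelope Pset (cross_moment x y v m1 m2)).
  apply/funext => m1; apply/funext => m2; apply: Ehat_envelope => P PP.
  by rewrite (expectation_centered_mul (X2 PP) (Y2 PP)).
rewrite (Mset_envelope X); last by move=> P /X2 /probability_Lfun2_Lfun1.
rewrite (Mset_envelope Y); last by move=> P /Y2 /probability_Lfun2_Lfun1.
apply: (supinf_cross_moment_itv (1 + K)%R) => // P PP;
  have [? ? ?] := mean_covariance_bound (X2 PP) (Y2 PP) (moments_le_K PP);
  rewrite /x /y /v //; lra.
Qed.

End square_integrable.

End sublinear_covariance.

Theorem proposition3p10 (d : measure_display) (T : measurableType d) (R : realType)
  (Pset : set (probability T R)) (X Y : T -> R) :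
  Pset !=set0 ->
  measurable_fun setT X -> measurable_fun setT Y ->
  Ehat Pset (fun w => X w ^+ 2)%R + Ehat Pset (fun w => Y w ^+ 2)%R < +oo ->
  upperC Pset X Y =
    ereal_sup [set ereal_inf [set Ehat Pset (fun w => (X w - m1) * (Y w - m2))%R
                             | m1 in [set: R]] | m2 in [set: R]]
  /\
  lowerC Pset X Y =
    ereal_inf [set ereal_sup [set - Ehat Pset (fun w => - ((X w - m1) * (Y w - m2)))%R
                             | m1 in [set: R]] | m2 in [set: R]].
Proof.
move=> P0 mX mY XY2; split; first exact: upperC_setT.
have mNX : measurable_fun setT (fun w => - X w)%R by exact: measurable_funN.
have NXY2 : Ehat Pset (fun w => (- X w) ^+ 2)%R + Ehat Pset (fun w => Y w ^+ 2)%R < +oo.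
  by under eq_fun do rewrite sqrrN.
by rewrite lowerC_oppl upperC_setT // -infsup_setT_oppl.
Qed.
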